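(* Let the cell types be indexed $\{0,1,\dots,n\}$ with $0$ the non-resistant type, and let $\boldsymbol{\alpha}_{(0)}=(\alpha_{(0,0)},\alpha_{(0,1)},\dots,\alpha_{(0,n)})$ be a probability vector. Define a random process $\boldsymbol{\pi}(t)\in\mathbb{Z}_+^{n+1}$, $t\in\mathbb{Z}_+$, by $\boldsymbol{\pi}(0)=\mathbf{e}_0$ (a single non-resistant cell) and $$\boldsymbol{\pi}(t+1)\sim \mathrm{MD}\big(\pi_0(t),\boldsymbol{\alpha}_{(0)}\big)+2\boldsymbol{\pi}(t)-\mathbf{e}_0\circ\boldsymbol{\pi}(t),$$ where $\mathrm{MD}(m,\mathbf{p})$ denotes a multinomial random vector with $m$ trials and outcome probabilities $\mathbf{p}$ (drawn conditionally on $\boldsymbol{\pi}(t)$), $\mathbf{e}_0$ is the first unit vector and $\circ$ is the componentwise product. Then for every $t\in\mathbb{Z}_+$, $\mathbb{E}(\pi_0(t))=(\alpha_{(0,0)}+1)^t$, and for every resistant type $q\ne0$, $\mathbb{E}(\pi_q(t+1))=\sum_{k=0}^{t}2^k\alpha_{(0,q)}(\alpha_{(0,0)}+1)^{t-k}$.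
   Context: This is a branching model of tumor growth: $\pi_q(t)$ is the number of cells of type $q$ at generation $t$; non-resistant cells may give rise to a mutated (single-drug resistant) daughter cell of type $q$ with probability $\alpha_{(0,q)}$, while resistant cells simply double each generation. *)

(* The process pi(t) is a finite-state Markov chain, so its law
   at each time is a finitely supported distribution; we represent such a law as
   a finite list of weighted outcomes (state, probability) (a mixture).  *)
From mathcomp Require Import all_boot all_order all_algebra.
Set Implicit Arguments. Unset Strict Implicit. Unset Printing Implicit Defensive.
Import Order.TTheory GRing.Theory Num.Theory.
Local Open Scope ring_scope.

Notation state n := {ffun 'I_n.+1 -> nat}.

Definition fdist (R : Type) (n : nat) := seq (state n * R).

Definition expect (R : numDomainType) (n : nat) (d : fdist R n) (f : state n -> R) : R :=
  \sum_(p <- d) p.2 * f p.1.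

(* multinomial MD(m, alpha): the sum of m i.i.d. categorical unit vectors e_{c_j},
   with P(c_j = i) = alpha i *)
Fixpoint multinomial (R : numDomainType) (n : nat) (alpha : 'I_n.+1 -> R) (m : nat)
  : seq (state n * R) :=
  match m with
  | 0 => [:: ([ffun => 0%N], 1)]
  | m'.+1 =>
      flatten [seq [seq ([ffun j => (p.1 j + (j == i))%N], p.2 * alpha i)
                   | i <- enum 'I_n.+1]
              | p : state n * R <- multinomial alpha m']
  end.

Definition det_part (n : nat) (x : state n) : state n :=
  [ffun j => (2 * x j - (j == ord0) * x j)%N].

Fixpoint law (R : numDomainType) (n : nat) (alpha : 'I_n.+1 -> R) (t : nat) : seq (state n * R) :=
  match t with
  | 0 => [:: ([ffun j => (j == ord0 : nat)], 1)]
  | t'.+1 =>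
      flatten [seq [seq ([ffun j => (v.1 j + det_part x.1 j)%N], x.2 * v.2)
                   | v : state n * R <- multinomial alpha (x.1 ord0)]
              | x : state n * R <- law alpha t']
  end.

(* Conditioning on pi(t), linearity of expectation and the multinomial mean
   E MD(m, alpha) = m alpha give the linear recursions
     E pi_0(t+1) = (alpha_0 + 1) E pi_0(t),
     E pi_q(t+1) = alpha_q E pi_0(t) + 2 E pi_q(t)   (q <> 0),
   whose solutions from pi(0) = e_0 are the stated closed forms. *)
From mathcomp Require Import all_boot all_order all_algebra.
From mathcomp Require Import ring.
Import Order.TTheory GRing.Theory Num.Theory.
Local Open Scope ring_scope.

Lemma recurrence_geometric_sum (R : comPzRingType) (a b c : R) (u : nat -> R) :
  u 0%N = 0 -> (forall t, u t.+1 = a * c ^+ t + b * u t) ->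
  forall t, u t.+1 = \sum_(k < t.+1) b ^+ k * a * c ^+ (t - k).
Proof.
move=> u0 uS; elim=> [|t IHt]; first by rewrite uS u0 big_ord1 mulr0 addr0; ring.
rewrite uS IHt [RHS]big_ord_recl subn0 mulr_sumr; congr (_ + _); first ring.
by apply: eq_bigr => k _; rewrite lift0 subSS exprS; ring.
Qed.

Section Expectation.
Variables (R : numDomainType) (n : nat).
Implicit Types (d : fdist R n) (f g : state n -> R).

Lemma eq_expect d f g : (forall x, f x = g x) -> expect d f = expect d g.
Proof. by move=> fg; apply: eq_bigr => p _; rewrite fg. Qed.

Lemma expectD d f g :
  expect d (fun x => f x + g x) = expect d f + expect d g.
Proof. by rewrite /expect -big_split; apply: eq_bigr => p _; rewrite mulrDr. Qed.

Lemma expectMr d f (c : R) : expect d (fun x => f x * c) = expect d f * c.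
Proof. by rewrite /expect big_distrl; apply: eq_bigr => p _; rewrite mulrA. Qed.

Lemma expectMl d f (c : R) : expect d (fun x => c * f x) = c * expect d f.
Proof. by rewrite /expect big_distrr; apply: eq_bigr => p _; rewrite mulrCA. Qed.

Lemma expect_cst d (c : R) : expect d (fun _ => c) = expect d (fun _ => 1) * c.
Proof. by rewrite -expectMr; apply: eq_expect => x; rewrite mul1r. Qed.

Lemma expect_seq1 (x : state n) f : expect [:: (x, 1)] f = f x.
Proof. by rewrite /expect big_seq1 mul1r. Qed.

End Expectation.

Lemma det_part_ord0 n (x : state n) : det_part x ord0 = x ord0.
Proof. by rewrite ffunE eqxx mul1n mul2n -addnn addnK. Qed.

Lemma det_part_neq0 n (x : state n) q : q != ord0 -> det_part x q = (2 * x q)%N.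
Proof. by move=> /negbTE q_neq0; rewrite ffunE q_neq0 mul0n subn0. Qed.

Section Process.
Variables (R : numDomainType) (n : nat) (alpha : 'I_n.+1 -> R).
Hypothesis alpha_sum1 : \sum_i alpha i = 1.
Implicit Types (f : state n -> R) (x : state n).

Lemma expect_multinomialS m f :
  expect (multinomial alpha m.+1) f =
  expect (multinomial alpha m)
    (fun v => \sum_i alpha i * f [ffun j => (v j + (j == i))%N]).
Proof.
rewrite /expect /= big_flatten big_map; apply: eq_bigr => p _.
by rewrite big_map big_enum mulr_sumr; apply: eq_bigr => i _; rewrite mulrA.
Qed.

Lemma multinomial_mass m : expect (multinomial alpha m) (fun _ => 1) = 1.
Proof.
elim: m => [|m IHm]; first exact: expect_seq1.
rewrite expect_multinomialS -[RHS]IHm; apply: eq_expect => v.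
by under eq_bigr do rewrite mulr1; rewrite alpha_sum1.
Qed.

Lemma multinomial_mean m j :
  expect (multinomial alpha m) (fun v => (v j)%:R) = m%:R * alpha j.
Proof.
elim: m => [|m IHm]; first by rewrite expect_seq1 ffunE mul0r.
rewrite expect_multinomialS.
transitivity (expect (multinomial alpha m) (fun v => (v j)%:R + alpha j)).
  apply: eq_expect => v; under eq_bigr do rewrite ffunE natrD mulrDr.
  rewrite big_split /= -big_distrl /= alpha_sum1 mul1r; congr (_ + _).
  rewrite (bigD1 j) //= eqxx mulr1 big1 ?addr0 // => i /negbTE.
  by rewrite eq_sym => ->; rewrite mulr0.
by rewrite expectD IHm expect_cst multinomial_mass mul1r mulrSr mulrDl mul1r.
Qed.

Lemma expect_lawS t f :
  expect (law alpha t.+1) f =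
  expect (law alpha t)
    (fun x => expect (multinomial alpha (x ord0))
                (fun v => f [ffun j => (v j + det_part x j)%N])).
Proof.
rewrite /expect /= big_flatten big_map; apply: eq_bigr => p _.
by rewrite big_map mulr_sumr; apply: eq_bigr => v _; rewrite mulrA.
Qed.

Lemma expect_lawS_count t j :
  expect (law alpha t.+1) (fun x => (x j)%:R) =
  expect (law alpha t) (fun x => (x ord0)%:R * alpha j + (det_part x j)%:R).
Proof.
rewrite expect_lawS; apply: eq_expect => x.
under eq_expect do rewrite ffunE natrD.
by rewrite expectD multinomial_mean expect_cst multinomial_mass mul1r.
Qed.

Lemma expect_law_ord0 t :
  expect (law alpha t) (fun x => (x ord0)%:R) = (alpha ord0 + 1) ^+ t.
Proof.
elim: t => [|t IHt]; first by rewrite expect_seq1 ffunE eqxx expr0.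
rewrite expect_lawS_count; under eq_expect do rewrite det_part_ord0.
by rewrite expectD expectMr IHt exprS mulrDl mul1r mulrC.
Qed.

Lemma expect_law_resistantS q t : q != ord0 ->
  expect (law alpha t.+1) (fun x => (x q)%:R) =
  alpha q * (alpha ord0 + 1) ^+ t + 2 * expect (law alpha t) (fun x => (x q)%:R).
Proof.
move=> q_neq0; rewrite expect_lawS_count expectD expectMr expect_law_ord0.
congr (_ + _); first exact: mulrC.
by rewrite -expectMl; apply: eq_expect => x; rewrite det_part_neq0 // natrM.
Qed.

End Process.

Theorem proposition1 (R : realFieldType) (n : nat) (alpha : 'I_n.+1 -> R)
  (alpha_ge0 : forall i, 0 <= alpha i) (alpha_sum1 : \sum_i alpha i = 1) :
  (forall t : nat, expect (law alpha t) (fun x => ((x ord0)%:R : R)) = (alpha ord0 + 1) ^+ t)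
  /\
  (forall (q : 'I_n.+1) (t : nat), q != ord0 ->
     expect (law alpha t.+1) (fun x => ((x q)%:R : R))
     = \sum_(k < t.+1) 2 ^+ k * alpha q * (alpha ord0 + 1) ^+ (t - k)).
Proof.
split=> [|q t q_neq0]; first exact: expect_law_ord0.
apply: (@recurrence_geometric_sum _ _ _ _ (fun t => expect (law alpha t) (fun x => (x q)%:R))).
  by rewrite expect_seq1 ffunE (negbTE q_neq0).
by move=> {}t; rewrite expect_law_resistantS.
Qed.
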